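(* Let $\mathcal F$ be a prime lattice filter of an MV-algebra $\mathcal L$. Then $\mathcal K(\mathcal F)\sqsubseteq\!\!\to\mathcal F=\mathcal F$.
   Context: $\mathcal L=(L,\oplus,\lnot,0)$ is an MV-algebra. We write $1=\lnot0$, $x\otimes y=\lnot(\lnot x\oplus\lnot y)$, and $x\to y=\lnot x\oplus y$, and use the usual lattice order. A lattice filter is a nonempty upward-closed subset closed under $\wedge$. It is prime if it is proper and $a\vee b\in\mathcal F$ implies $a\in\mathcal F$ or $b\in\mathcal F$. For an upward-closed set $\mathcal F$ and $a\in L$, let $\mathcal F_a=\{z: z\to a\notin\mathcal F\}$. The kernel of $\mathcal F$ is $\mathcal K(\mathcal F)=\{z : \forall a\notin\mathcal F,\ z\to a\notin\mathcal F\}$, which is contained in $\mathcal F$. For $\mathcal H\subseteq\mathcal G$ we put $\mathcal H\sqsubseteq\!\!\to\mathcal G=\bigcap_{a\in L\setminus\mathcal G}\mathcal H_a$, and in general $\mathcal H\sqsubseteq\!\!\to\mathcal G:=(\mathcal H\cap\mathcal G)\sqsubseteq\!\!\to\mathcal G$. *)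

From Stdlib Require Import Classical.

Record MVAlgebra := {
  mv_car :> Type;
  mv_plus : mv_car -> mv_car -> mv_car;
  mv_neg : mv_car -> mv_car;
  mv_zero : mv_car;
  mv_assoc : forall x y z, mv_plus x (mv_plus y z) = mv_plus (mv_plus x y) z;
  mv_comm : forall x y, mv_plus x y = mv_plus y x;
  mv_plus0 : forall x, mv_plus x mv_zero = x;
  mv_negneg : forall x, mv_neg (mv_neg x) = x;
  mv_absorb : forall x, mv_plus x (mv_neg mv_zero) = mv_neg mv_zero;
  mv_luk : forall x y,
    mv_plus (mv_neg (mv_plus (mv_neg x) y)) y =
    mv_plus (mv_neg (mv_plus (mv_neg y) x)) x
}.

Arguments mv_plus {_} _ _.
Arguments mv_neg {_} _.
Arguments mv_zero {_}.

Section MVDefs.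
Variable L : MVAlgebra.

Definition mv_one : L := mv_neg mv_zero.
Definition mv_times (x y : L) : L := mv_neg (mv_plus (mv_neg x) (mv_neg y)).
Definition mv_impl (x y : L) : L := mv_plus (mv_neg x) y.
Definition mv_le (x y : L) : Prop := mv_impl x y = mv_one.
Definition mv_meet (x y : L) : L := mv_times x (mv_impl x y).
Definition mv_join (x y : L) : L := mv_plus (mv_times x (mv_neg y)) y.

Definition upward_closed (F : L -> Prop) : Prop :=
  forall x y, F x -> mv_le x y -> F y.

Definition lattice_filter (F : L -> Prop) : Prop :=
  (exists x, F x) /\ upward_closed F /\
  (forall x y, F x -> F y -> F (mv_meet x y)).

Definition proper (F : L -> Prop) : Prop := exists x, ~ F x.

Definition prime_lattice_filter (F : L -> Prop) : Prop :=
  lattice_filter F /\ proper F /\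
  (forall a b, F (mv_join a b) -> F a \/ F b).

Definition fiber (F : L -> Prop) (a : L) : L -> Prop :=
  fun z => ~ F (mv_impl z a).

Definition kernel (F : L -> Prop) : L -> Prop :=
  fun z => forall a, ~ F a -> ~ F (mv_impl z a).

(* H [=-> G := (H cap G) [=-> G = intersection over a notin G of (H cap G)_a *)
Definition sqto (H G : L -> Prop) : L -> Prop :=
  fun z => forall a, ~ G a -> fiber (fun w => H w /\ G w) a z.

End MVDefs.

Arguments mv_one {_}.
Arguments mv_impl {_} _ _.
Arguments mv_le {_} _ _.
Arguments mv_meet {_} _ _.
Arguments mv_join {_} _ _.
Arguments upward_closed {_} _.
Arguments lattice_filter {_} _.
Arguments proper {_} _.
Arguments prime_lattice_filter {_} _.
Arguments fiber {_} _ _ _.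
Arguments kernel {_} _ _.
Arguments sqto {_} _ _ _.

(* Unfolding the definitions, z lies in K(F) [=-> F iff for every a outside F
   the element z -> a is not in K(F) /\ F.  The two inclusions rest on two
   elementary MV-algebra facts:
   - [impl_self] and [impl_one_l]: z -> z = 1 and 1 -> a = a.  Hence 1 lies in
     the kernel of every set, and 1 lies in any nonempty upward-closed F; so
     for z outside F the choice a := z shows z is not in K(F) [=-> F.
   - [le_impl_impl]: z <= (z -> a) -> a.  If z is in F and z -> a were in K(F)
     for some a outside F, then (z -> a) -> a would be outside F although it
     lies above z, contradicting upward closure. *)
From Stdlib Require Import Classical.

Section MVIdentities.
Variable L : MVAlgebra.

Lemma neg_one : @mv_neg L mv_one = mv_zero.
Proof. unfold mv_one. apply mv_negneg. Qed.

Lemma plus_zero_l (x : L) : mv_plus mv_zero x = x.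
Proof. rewrite mv_comm. apply mv_plus0. Qed.

Lemma plus_one_l (x : L) : mv_plus mv_one x = mv_one.
Proof. rewrite mv_comm. apply mv_absorb. Qed.

Lemma le_one (x : L) : mv_le x mv_one.
Proof. unfold mv_le, mv_impl. apply mv_absorb. Qed.

(* x -> x = 1, obtained from the Lukasiewicz axiom with y := 1. *)
Lemma impl_self (x : L) : mv_impl x x = mv_one.
Proof.
  pose proof (mv_luk L x mv_one) as luk.
  unfold mv_one in luk. rewrite !mv_absorb, mv_negneg, plus_zero_l in luk.
  unfold mv_impl, mv_one. congruence.
Qed.

Lemma impl_one_l (a : L) : mv_impl mv_one a = a.
Proof. unfold mv_impl. rewrite neg_one. apply plus_zero_l. Qed.

Lemma le_impl_impl (z a : L) : mv_le z (mv_impl (mv_impl z a) a).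
Proof.
  unfold mv_le, mv_impl.
  rewrite mv_luk, (mv_comm L (mv_neg (mv_plus (mv_neg a) z)) z), mv_assoc.
  fold (mv_impl z z). rewrite impl_self. apply plus_one_l.
Qed.

End MVIdentities.

Section KernelArrow.
Variable L : MVAlgebra.
Variable F : L -> Prop.

Lemma kernel_one : kernel F mv_one.
Proof. intros a notFa. rewrite impl_one_l. exact notFa. Qed.

Hypothesis F_nonempty : exists x, F x.
Hypothesis F_up : upward_closed F.

Lemma filter_one : F mv_one.
Proof. destruct F_nonempty as [x Fx]. exact (F_up x mv_one Fx (le_one L x)). Qed.

(* K(F) [=-> F is contained in F: for z outside F, take a := z. *)
Lemma sqto_kernel_sub : forall z, sqto (kernel F) F z -> F z.
Proof.
  intros z in_sqto. apply NNPP. intros notFz.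
  apply (in_sqto z notFz). rewrite impl_self.
  exact (conj kernel_one filter_one).
Qed.

(* F is contained in K(F) [=-> F: if z is in F and a is not, then z -> a is
   not in the kernel, as (z -> a) -> a lies above z. *)
Lemma sub_sqto_kernel : forall z, F z -> sqto (kernel F) F z.
Proof.
  intros z Fz a notFa [kernel_za _].
  apply (kernel_za a notFa).
  exact (F_up z _ Fz (le_impl_impl L z a)).
Qed.

End KernelArrow.

Theorem mainTheorem5 (L : MVAlgebra) (F : L -> Prop) :
  prime_lattice_filter F ->
  forall z : L, sqto (kernel F) F z <-> F z.
Proof.
  intros [[F_nonempty [F_up _]] _] z. split.
  - exact (sqto_kernel_sub L F F_nonempty F_up z).
  - exact (sub_sqto_kernel L F F_up z).
Qed.
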